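(* For $n\ge1$ let \[ \mathbf{M}_n=\begin{bmatrix} \frac{n}{2(2n+1)} & -\frac{3}{2n(2n+1)} & 0 & \frac{3}{2n^{5}}\\ 0 & \frac{n}{2(2n+1)} & -\frac{3}{2n(2n+1)} & \frac{3}{2n^{3}}\\ 0 & 0 & \frac{n}{2(2n+1)} & \frac{3}{2n}\\ 0 & 0 & 0 & 1 \end{bmatrix}. \] Then $\lim_{N\to\infty}\mathbf{M}_1\cdots\mathbf{M}_N$ exists and equals \[ \begin{bmatrix}0&0&0&\zeta(6)+\delta\\0&0&0&\zeta(4)\\0&0&0&\zeta(2)\\0&0&0&1\end{bmatrix},\qquad \delta=9\sum_{n\ge1}\frac{H_{n-1}^{(4)}}{\binom{2n}{n}n^{2}}\ (\approx 0.438668). \] In particular, since $\delta>0$, the identity asserting that this limit equals the matrix with last column $(\zeta(6),\zeta(4),\zeta(2),1)^t$ and all other entries zero is false.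
   Context: $\zeta$ denotes the Riemann zeta function. For integers $n\ge0$ and $p\ge1$, $H_n^{(p)}=\sum_{k=1}^{n}k^{-p}$ (so $H_0^{(p)}=0$). *)

From HB Require Import structures.
From mathcomp Require Import all_boot all_order all_algebra.
From mathcomp Require Import all_classical all_reals all_analysis.
Set Implicit Arguments. Unset Strict Implicit. Unset Printing Implicit Defensive.
Import Order.TTheory GRing.Theory Num.Theory.
Import numFieldNormedType.Exports.
Local Open Scope ring_scope.
Local Open Scope classical_set_scope.

Definition harm {R : realType} (n p : nat) : R :=
  \sum_(1 <= k < n.+1) (k%:R ^+ p)^-1.

Definition zeta {R : realType} (p : nat) : R :=
  limn (series (fun k : nat => ((k.+1)%:R ^+ p : R)^-1)).

(* term of delta for index n = k+1 : H_{n-1}^{(4)} / (binom(2n,n) n^2) *)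
Definition delta_term {R : realType} (k : nat) : R :=
  harm k 4 / ('C(k.+1.*2, k.+1)%:R * (k.+1)%:R ^+ 2).

Definition delta {R : realType} : R := 9 * limn (series (@delta_term R)).

Definition Mmat {R : realType} (n : nat) : 'M[R]_4 :=
  let x : R := n%:R in
  \matrix_(i < 4, j < 4)
    match nat_of_ord i, nat_of_ord j with
    | 0, 0 | 1, 1 | 2, 2 => x / (2 * (2 * x + 1))
    | 0, 1 | 1, 2 => - (3 / (2 * x * (2 * x + 1)))
    | 0, 3 => 3 / (2 * x ^+ 5)
    | 1, 3 => 3 / (2 * x ^+ 3)
    | 2, 3 => 3 / (2 * x)
    | 3, 3 => 1
    | _, _ => 0
    end.

Definition Mprod {R : realType} (N : nat) : 'M[R]_4 :=
  \prod_(1 <= n < N.+1) Mmat n.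

Definition Mlim {R : realType} : 'M[R]_4 :=
  \matrix_(i < 4, j < 4)
    if nat_of_ord j == 3%N then
      match nat_of_ord i with
      | 0 => zeta 6 + delta
      | 1 => zeta 4
      | 2 => zeta 2
      | _ => 1
      end
    else 0.

From HB Require Import structures.
From mathcomp Require Import all_boot all_order all_algebra.
From mathcomp Require Import all_classical all_reals all_analysis.
From mathcomp Require Import ring lra zify.
Import Order.TTheory GRing.Theory Num.Theory.
Import numFieldNormedType.Exports.
Local Open Scope ring_scope.
Local Open Scope classical_set_scope.
Set Implicit Arguments. Unset Strict Implicit. Unset Printing Implicit Defensive.

(* Upper triangular Toeplitz 3x3 matrices form the algebra R[X]/(X^3).  Writing
   M_n = [A_n b_n; 0 1] with A_n such a matrix, M_1...M_N = [A_1...A_N c_N; 0 1]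
   with c_N = sum_(n<N) A_1...A_n b_(n+1); the entries of A_1...A_N decay like
   (2/3)^N, so everything hinges on the limit of c_N.
   It is computed with a Markov-WZ pair for sum_k 1/(k^2 - X), whose coefficients
   are zeta(2), zeta(4), zeta(6): for
     F(n,k) = (2n+1) prod_(j=1..n) (j^2 - X) / prod_(j=0..n) ((k+j)^2 - X)
   one has F(n,k) - alpha_(n+1) F(n+1,k) = G(n+1,k) - G(n+1,k+1), where alpha_n
   differs from A_n by -3X^2/(2n^3(2n+1)) and G(n+1,1) = b_(n+1).  Summing over
   k <= K and telescoping in n shows that sum_(n<N) alpha_1...alpha_n b_(n+1)
   tends to zeta(2) + zeta(4) X + zeta(6) X^2.  Finally
   A_1...A_n = alpha_1...alpha_n (1 + 3 H_n^(4) X^2), and these gauge factors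
   add exactly 9 sum_n H_(n-1)^(4) / (binom(2n,n) n^2) = delta to the X^2
   coefficient. *)

(** * Polynomials modulo X^n *)

Section CongruenceModXn.
Variables (R : nzRingType) (n : nat).
Implicit Types p q : {poly R}.

Definition eqmodX p q := forall i, (i < n)%N -> p`_i = q`_i.

Lemma eqmodX_eq p q : p = q -> eqmodX p q. Proof. by move->. Qed.

Lemma eqmodX_refl p : eqmodX p p. Proof. by []. Qed.

Lemma eqmodX_sym p q : eqmodX p q -> eqmodX q p.
Proof. by move=> epq i /epq ->. Qed.

Lemma eqmodX_trans q p r : eqmodX p q -> eqmodX q r -> eqmodX p r.
Proof. by move=> epq eqr i lti; rewrite epq // eqr. Qed.

Lemma eqmodXD p p' q q' :
  eqmodX p p' -> eqmodX q q' -> eqmodX (p + q) (p' + q').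
Proof. by move=> ep eq i lti; rewrite !coefD ep // eq. Qed.

Lemma eqmodXB p p' q q' :
  eqmodX p p' -> eqmodX q q' -> eqmodX (p - q) (p' - q').
Proof. by move=> ep eq i lti; rewrite !coefB ep // eq. Qed.

Lemma eqmodXM p p' q q' :
  eqmodX p p' -> eqmodX q q' -> eqmodX (p * q) (p' * q').
Proof.
move=> ep eq i lti; rewrite !coefM; apply: eq_bigr => j _.
rewrite ep ?eq //; first exact: leq_ltn_trans (leq_subr _ _) lti.
by apply: leq_ltn_trans lti; rewrite -ltnS.
Qed.

Lemma eqmodX_sum (I : eqType) (r : seq I) (P : pred I) (F G : I -> {poly R}) :
  {in r, forall i, P i -> eqmodX (F i) (G i)} ->
  eqmodX (\sum_(i <- r | P i) F i) (\sum_(i <- r | P i) G i).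
Proof.
move=> eFG; rewrite big_seq_cond [X in eqmodX _ X]big_seq_cond.
elim/big_rec2: _ => [|i p q /andP[ri Pi] epq]; first exact: eqmodX_refl.
exact: eqmodXD (eFG i ri Pi) epq.
Qed.

Lemma eqmodX_prod (I : eqType) (r : seq I) (P : pred I) (F G : I -> {poly R}) :
  {in r, forall i, P i -> eqmodX (F i) (G i)} ->
  eqmodX (\prod_(i <- r | P i) F i) (\prod_(i <- r | P i) G i).
Proof.
move=> eFG; rewrite big_seq_cond [X in eqmodX _ X]big_seq_cond.
elim/big_rec2: _ => [|i p q /andP[ri Pi] epq]; first exact: eqmodX_refl.
exact: eqmodXM (eFG i ri Pi) epq.
Qed.

Lemma eqmodX_prod1 (I : eqType) (r : seq I) (P : pred I) (F : I -> {poly R}) :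
  {in r, forall i, P i -> eqmodX (F i) 1} -> eqmodX (\prod_(i <- r | P i) F i) 1.
Proof.
by move=> eF1; rewrite -[X in eqmodX _ X](big1_eq (op := *%R) r P); exact: eqmodX_prod.
Qed.

Lemma eqmodX_cancel d d' p q :
  eqmodX (d * d') 1 -> eqmodX (p * d) (q * d) -> eqmodX p q.
Proof.
move=> dK epq.
have eK r : eqmodX (r * d * d') r by rewrite -mulrA -[X in eqmodX _ X]mulr1; exact: eqmodXM.
apply: eqmodX_trans (eqmodX_sym (eK p)) _; apply: eqmodX_trans (eK q).
exact: eqmodXM epq (eqmodX_refl d').
Qed.

Lemma eqmodX_truncation p : eqmodX p (\sum_(j < n) p`_j *: 'X^j).
Proof.
move=> i lti; rewrite coef_sum (bigD1 (Ordinal lti)) //= coefZ coefXn eqxx mulr1.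
rewrite big1 ?addr0 // => j neji; rewrite coefZ coefXn.
by move: neji; rewrite -val_eqE /= eq_sym => /negbTE ->; rewrite mulr0.
Qed.

End CongruenceModXn.

Section NormModXn.
Variables (R : numDomainType) (n : nat).
Implicit Types p q : {poly R}.

Definition normX p : R := \sum_(i < n) `|p`_i|.

Lemma normX_ge0 p : 0 <= normX p.
Proof. by apply: sumr_ge0 => i _. Qed.

Lemma normX_eqmod p q : eqmodX n p q -> normX p = normX q.
Proof. by move=> epq; apply: eq_bigr => i _; rewrite epq. Qed.

Lemma coef_le_normX p i : (i < n)%N -> `|p`_i| <= normX p.
Proof.
move=> lti; rewrite /normX (bigD1 (Ordinal lti)) //= lerDl.
by apply: sumr_ge0 => j _.
Qed.

Lemma normXD p q : normX (p + q) <= normX p + normX q.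
Proof. by rewrite -big_split; apply: ler_sum => i _; rewrite coefD ler_normD. Qed.

Lemma normXZ c p : normX (c *: p) = `|c| * normX p.
Proof. by rewrite mulr_sumr; apply: eq_bigr => i _; rewrite coefZ normrM. Qed.

Lemma normX_sum (I : Type) (r : seq I) (P : pred I) (F : I -> {poly R}) :
  normX (\sum_(i <- r | P i) F i) <= \sum_(i <- r | P i) normX (F i).
Proof.
elim/big_rec2: _ => [|i x y _ lexy].
  by rewrite /normX big1 // => i _; rewrite coef0 normr0.
exact: le_trans (normXD _ _) (lerD (lexx _) lexy).
Qed.

Lemma normX_shift j p : normX ('X^j * p) <= normX p.
Proof.
rewrite /normX -(big_mkord xpredT (fun i => `|('X^j * p)`_i|)).
rewrite -(big_mkord xpredT (fun i => `|p`_i|)).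
case: (leqP n j) => [lenj|ltjn].
  rewrite big1_seq ?sumr_ge0 // => i /andP[_]; rewrite mem_index_iota coefXnM.
  by case/andP=> _ /leq_trans/(_ lenj) ->; rewrite normr0.
rewrite (big_cat_nat (leq0n j) (ltnW ltjn)) /= big1_seq ?add0r; last first.
  by move=> i /andP[_]; rewrite mem_index_iota coefXnM => /andP[_ ->]; rewrite normr0.
rewrite -{1}[j]add0n big_addn (big_cat_nat (leq0n (n - j)) (leq_subr j n)) /=.
rewrite -[leLHS]addr0; apply: lerD; last exact: sumr_ge0.
by apply: ler_sum => i _; rewrite coefXnM ltnNge leq_addl /= addnK.
Qed.

(* Modulo X^n, p is the sum of the p_j X^j with j < n, and X^j only shifts. *)
Lemma normXM p q : normX (p * q) <= normX p * normX q.
Proof.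
rewrite (normX_eqmod (eqmodXM (eqmodX_truncation p) (eqmodX_refl q))).
rewrite mulr_suml; apply: le_trans (normX_sum _ _ _) _.
rewrite /normX mulr_suml; apply: ler_sum => j _.
rewrite -scalerAl -/(normX _) normXZ; apply: ler_wpM2l => //.
exact: normX_shift.
Qed.

Lemma normX1_le : normX 1 <= 1.
Proof.
rewrite /normX; case: n => [|m]; first by rewrite big_ord0.
by rewrite big_ord_recl coef1 normr1 big1 ?addr0 // => i _; rewrite coef1 normr0.
Qed.

Lemma normX_prod (I : Type) (r : seq I) (P : pred I) (F : I -> {poly R}) :
  normX (\prod_(i <- r | P i) F i) <= \prod_(i <- r | P i) normX (F i).
Proof.
elim/big_rec2: _ => [|i x y _ lexy]; first exact: normX1_le.
apply: le_trans (normXM _ _) _; apply: ler_wpM2l; first exact: normX_ge0.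
exact: lexy.
Qed.

Lemma normX_prod_nat_le (F : nat -> {poly R}) r N :
  (forall m, (0 < m <= N)%N -> normX (F m) <= r) ->
  normX (\prod_(1 <= m < N.+1) F m) <= r ^+ N.
Proof.
move=> leFr; apply: le_trans (normX_prod _ _ _) _.
have -> : r ^+ N = \prod_(1 <= m < N.+1) r by rewrite prodr_const_nat subn1.
rewrite big_nat_cond [leRHS]big_nat_cond; apply: ler_prod => m /andP[/andP[m1 mN] _].
by rewrite normX_ge0 leFr // m1 -ltnS.
Qed.

End NormModXn.

Section Poly3.
Variable R : comNzRingType.
Implicit Types (p : {poly R}) (a b c d e f : R).

Definition poly3 a b c : {poly R} := a%:P + b *: 'X + c *: 'X^2.

Lemma coef_poly3 a b c i : (poly3 a b c)`_i =
  if i == 0%N then a else if i == 1%N then b else if i == 2%N then c else 0.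
Proof.
rewrite /poly3 !coefD !coefZ coefC coefX coefXn.
by case: i => [|[|[|i]]] /=; rewrite ?mulr0 ?mulr1 ?addr0 ?add0r.
Qed.

Lemma poly3_eq p a b c : (forall i, p`_i = (poly3 a b c)`_i) -> p = poly3 a b c.
Proof. by move=> epq; apply/polyP. Qed.

Lemma eqmodX_poly3 p : eqmodX 3 p (poly3 p`_0 p`_1 p`_2).
Proof. by move=> [|[|[|i]]] //= _; rewrite coef_poly3. Qed.

Lemma poly3M a b c d e f :
  eqmodX 3 (poly3 a b c * poly3 d e f)
           (poly3 (a * d) (a * e + b * d) (a * f + b * e + c * d)).
Proof.
move=> i lti; rewrite coefM coef_poly3.
by case: i lti => [|[|[|i]]] //= _; rewrite !big_ord_recr big_ord0 /= !coef_poly3 /=; ring.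
Qed.

Lemma poly3D a b c d e f : poly3 a b c + poly3 d e f = poly3 (a + d) (b + e) (c + f).
Proof.
by apply: poly3_eq => i; rewrite coefD !coef_poly3; case: i => [|[|[|i]]] //=; rewrite addr0.
Qed.

Lemma poly3N a b c : - poly3 a b c = poly3 (- a) (- b) (- c).
Proof.
by apply: poly3_eq => i; rewrite coefN !coef_poly3; case: i => [|[|[|i]]] //=; rewrite oppr0.
Qed.

Lemma poly3C a : a%:P = poly3 a 0 0.
Proof. by apply: poly3_eq => i; rewrite coefC coef_poly3; case: i => [|[|[|i]]]. Qed.

Lemma poly3_subX a : a%:P - 'X = poly3 a (-1) 0.
Proof.
apply: poly3_eq => i; rewrite coefB coefC coefX coef_poly3.
by case: i => [|[|[|i]]] //=; rewrite ?subr0 ?sub0r ?subrr.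
Qed.

End Poly3.

Lemma normX_poly3 (R : numDomainType) (a b c : R) :
  normX 3 (poly3 a b c) = `|a| + `|b| + `|c|.
Proof. by rewrite /normX !big_ord_recr big_ord0 /= !coef_poly3 add0r. Qed.

Lemma cvg_mx_entries (T : puniformType) (U : Type) (F : set_system U) (FF : Filter F)
    m n (G : U -> 'M[T]_(m, n)) (M : 'M[T]_(m, n)) :
  (forall i j, (fun x => G x i j) @ F --> M i j) -> G @ F --> M.
Proof.
move=> cvgG; apply/cvg_mx_entourageP => A entA.
suff : \forall x \near F, forall i j, (M i j, G x i j) \in A by [].
apply: filter_forall => i; apply: filter_forall => j.
have Aij := (cvg_app_entourageP _ FF _).1 (cvgG i j) A entA.
by near=> x; rewrite inE; near: x.
Unshelve. all: by end_near. Qed.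

Section RealSequences.
Variable R : realFieldType.
Implicit Types (u v w : R^nat) (l : R).

Lemma ler_dist_cvg u w l c b :
  u @ \oo --> l -> w @ \oo --> 0 ->
  (forall k, `|c - u k| <= b + w k) -> `|c - l| <= b.
Proof.
move=> ul w0 le_cu.
have cvg_d : (fun k => `|c - u k| - w k) @ \oo --> `|c - l| - 0.
  by apply: cvgB w0; apply: cvg_norm; apply: cvgB ul; exact: cvg_cst.
rewrite subr0 in cvg_d; apply: (ler_cvg_to cvg_d (cvg_cst b)).
by apply: nearW => k /=; rewrite lerBlDr.
Qed.

Lemma cvg_near u v w l :
  v @ \oo --> l -> w @ \oo --> 0 -> (forall k, `|u k - v k| <= w k) -> u @ \oo --> l.
Proof.
move=> vl w0 le_uv.
have uv0 : (fun k => u k - v k) @ \oo --> 0.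
  apply/norm_cvg0P; apply: (@squeeze_cvgr _ _ _ _ (cst 0) w) => //; last exact: cvg_cst.
  by apply: nearW => k /=; rewrite normr_ge0 le_uv.
have -> : u = (fun k => (u k - v k) + v k) by apply: funext => k; rewrite subrK.
by rewrite -[l]add0r; apply: cvgD.
Qed.

End RealSequences.

Lemma central_binS m : (m.+1 * 'C(m.+1.*2, m.+1) = 2 * (m.*2).+1 * 'C(m.*2, m))%N.
Proof.
have binS_sym : 'C((m.*2).+1, m) = 'C((m.*2).+1, m.+1).
  rewrite -bin_sub; last by rewrite -addnn; lia.
  by congr binomial; rewrite -addnn; lia.
have binS_double : 'C(m.+1.*2, m.+1) = ('C((m.*2).+1, m.+1) * 2)%N.
  by rewrite doubleS binS binS_sym addnn muln2.
have := mul_bin_diag (m.*2).+1 m; rewrite /= binS_double.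
set c1 := 'C(_, m.+1); set c0 := 'C(_, m).
by rewrite -addnn; nia.
Qed.

Lemma central_bin_ge2 m : (2 <= 'C(m.+1.*2, m.+1))%N.
Proof.
have c0 : (0 < 'C(m.*2, m))%N by rewrite bin_gt0 -addnn leq_addr.
by have := central_binS m; nia.
Qed.

Section Series.
Variable R : realType.
Local Notation sq k := ((k%:R : R) ^+ 2).

Lemma sum_inv_sqr_le2 K : \sum_(1 <= k < K.+1) (sq k)^-1 <= 2.
Proof.
suff telescoped K' : \sum_(1 <= k < K'.+2) (sq k)^-1 <= 2 - (K'.+1%:R)^-1.
  case: K => [|K]; first by rewrite big_geq.
  by apply: le_trans (telescoped K) _; rewrite lerBlDr lerDl invr_ge0.
elim: K' => [|K' IH]; first by rewrite big_nat1 expr1n invr1; lra.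
rewrite big_nat_recr //=; apply: le_trans (lerD IH (lexx _)) _.
rewrite -[K'.+2%:R]natr1; have : 1 <= K'.+1%:R :> R by rewrite ler1n.
set y := K'.+1%:R => y1.
have -> : 2 - y^-1 + ((y + 1) ^+ 2)^-1 = 2 - (y + 1)^-1 - (y + 1)^-2 * y^-1.
  by field; rewrite ?andbT gt_eqF //; lra.
by rewrite lerBlDr lerDl mulr_ge0 // invr_ge0 ?exprn_ge0 //; lra.
Qed.

Lemma cvg_series_inv_sqr : cvgn (series (fun k => (sq k.+1)^-1)).
Proof.
apply: nondecreasing_is_cvgn.
  by rewrite seriesEnat; apply: nondecreasing_series => n _ _; rewrite invr_ge0 exprn_ge0.
exists 2 => _ [n _ <-]; rewrite seriesEnat /=.
by have := sum_inv_sqr_le2 n; rewrite big_add1.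
Qed.

Lemma inv_pow_le_inv_sqr (e : nat) k : (2 <= e)%N ->
  ((k.+1)%:R ^+ e)^-1 <= (sq k.+1)^-1 :> R.
Proof.
by move=> e2; rewrite lef_pV2 ?posrE ?exprn_gt0 // ler_weXn2l // ler1n.
Qed.

Lemma cvg_series_inv_pow (e : nat) : (2 <= e)%N ->
  cvgn (series (fun k => ((k.+1)%:R ^+ e)^-1 : R)).
Proof.
move=> e2; apply: (series_le_cvg _ _ _ cvg_series_inv_sqr) => k.
- by rewrite invr_ge0 exprn_ge0.
- by rewrite invr_ge0 exprn_ge0.
- exact: inv_pow_le_inv_sqr.
Qed.

Lemma harm_ge0 k e : 0 <= harm k e :> R.
Proof. by apply: sumr_ge0 => j _; rewrite invr_ge0 exprn_ge0. Qed.

Lemma harm4_le2 k : harm k 4 <= 2 :> R.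
Proof.
apply: le_trans (sum_inv_sqr_le2 k); rewrite /harm big_nat_cond [leRHS]big_nat_cond.
apply: ler_sum => -[|j] /andP[/andP[// _ _] _]; exact: inv_pow_le_inv_sqr.
Qed.

Lemma delta_term_ge0 k : 0 <= delta_term k :> R.
Proof. by rewrite divr_ge0 ?harm_ge0 // mulr_ge0 // exprn_ge0. Qed.

Lemma delta_term_le_inv_sqr k : delta_term k <= (sq k.+1)^-1 :> R.
Proof.
have C2 : 2 <= 'C(k.+1.*2, k.+1)%:R :> R by rewrite ler_nat central_bin_ge2.
have k1 : 1 <= sq k.+1 by rewrite exprn_ege1 // ler1n.
rewrite /delta_term invfM mulrA ler_piMl ?invr_ge0 ?exprn_ge0 //.
rewrite ler_pdivrMr; last by lra.
by have := harm4_le2 k; lra.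
Qed.

Lemma cvg_delta_series : cvgn (series (@delta_term R)).
Proof.
apply: (series_le_cvg _ _ delta_term_le_inv_sqr cvg_series_inv_sqr) => k.
  exact: delta_term_ge0.
by rewrite invr_ge0 exprn_ge0.
Qed.

Lemma delta_gt0 : 0 < @delta R.
Proof.
rewrite /delta mulr_gt0 //.
have incr : nondecreasing_seq (series (@delta_term R)).
  by rewrite seriesEnat; apply: nondecreasing_series => n _ _; exact: delta_term_ge0.
apply: lt_le_trans (nondecreasing_cvgn_le incr cvg_delta_series 2).
rewrite seriesEnat /= big_nat_recr //= big_nat1.
apply: ltr_pwDr (delta_term_ge0 0).
rewrite /delta_term /harm big_nat1 expr1n invr1 divr_gt0 //.
by rewrite mulr_gt0 // ?ltr0n ?bin_gt0 // exprn_gt0.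
Qed.

Lemma lin_le_geometric N : 2 * N%:R + 1 <= 3 * (3 / 2) ^+ N :> R.
Proof.
have shifted M : 2 * M%:R + 5 <= 3 * (3 / 2) ^+ M.+2 :> R.
  elim: M => [|M IH]; first by rewrite expr2; lra.
  have M0 : 0 <= M%:R :> R by exact: ler0n.
  by rewrite exprS -[M.+1%:R]natr1; lra.
case: N => [|[|N]]; rewrite ?expr0 ?expr1; try lra.
by have := shifted N; rewrite -addn2 natrD; lra.
Qed.

Lemma cvg_lin_half_pow : (fun N => 6 * (2 * N%:R + 1) * (1 / 2) ^+ N : R) @ \oo --> 0.
Proof.
have geo0 : geometric 18 (3 / 4 : R) @ \oo --> 0.
  by apply: cvg_geometric; rewrite ger0_norm; lra.
apply: (squeeze_cvgr _ (cvg_cst 0) geo0); apply: nearW => N /=.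
have h0 : 0 <= (1 / 2 : R) ^+ N by rewrite exprn_ge0 //; lra.
have N0 : 0 <= N%:R :> R by exact: ler0n.
rewrite !mulr_ge0 //=; try lra.
have -> : (3 / 4 : R) ^+ N = (3 / 2) ^+ N * (1 / 2) ^+ N.
  by rewrite -exprMn; congr (_ ^+ _); lra.
by have := lin_le_geometric N; nra.
Qed.

End Series.

Section MatrixProduct.
Variable R : realType.
Implicit Types (p : {poly R}) (c : R).
Local Notation sq k := ((k%:R : R) ^+ 2).

(* [Mblock n] and [Mcol n] are A_n and b_n: the Toeplitz block with diagonals
   (a0, a1, a2) is a0 + a1 X + a2 X^2, and the column (x0, x1, x2) is
   x2 + x1 X + x0 X^2, so that block-times-column is a product mod X^3. *)
Definition Mblock n := let x : R := n%:R in
  poly3 (x / (2 * (2 * x + 1))) (- (3 / (2 * x * (2 * x + 1)))) 0.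

Definition Mcol n := let x : R := n%:R in
  poly3 (3 / (2 * x)) (3 / (2 * x ^+ 3)) (3 / (2 * x ^+ 5)).

Definition Mblock_prod n := \prod_(1 <= m < n.+1) Mblock m.

Definition Mcol_sum N := \sum_(0 <= n < N) Mblock_prod n * Mcol n.+1.

Definition Mprod_blocks N : 'M[R]_4 := \matrix_(i < 4, j < 4)
  if nat_of_ord i == 3%N then (if nat_of_ord j == 3%N then 1 else 0)
  else if nat_of_ord j == 3%N then (Mcol_sum N)`_(2 - i)
  else if (i <= j)%N then (Mblock_prod N)`_(j - i) else 0.

Lemma MprodE N : Mprod N = Mprod_blocks N.
Proof.
elim: N => [|N IH].
  rewrite /Mprod big_geq //; apply/matrixP => i j.
  rewrite !mxE /Mcol_sum /Mblock_prod !big_geq // coef0.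
  by case: i j => [[|[|[|[|i]]]] Hi] [[|[|[|[|j]]]] Hj] //=; rewrite ?coef1.
rewrite /Mprod big_nat_recr //= -/(Mprod N) IH; apply/matrixP => i j.
have prodS : Mblock_prod N.+1 = Mblock_prod N * Mblock N.+1.
  by rewrite /Mblock_prod big_nat_recr.
have sumS : Mcol_sum N.+1 = Mcol_sum N + Mblock_prod N * Mcol N.+1.
  by rewrite /Mcol_sum big_nat_recr.
rewrite -mulmxE mxE !big_ord_recl big_ord0 !mxE /bump /= prodS sumS.
case: i j => [[|[|[|[|i]]]] Hi] [[|[|[|[|j]]]] Hj] //=.
all: rewrite ?coefD ?coefM ?coef0 ?big_ord_recr ?big_ord0 /= ?coef_poly3 /=.
all: ring.
Qed.

(** * A Markov-WZ pair *)

Lemma sq_neq0 k : (0 < k)%N -> sq k != 0.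
Proof. by move=> k0; rewrite expf_neq0 // pnatr_eq0 -lt0n. Qed.

Definition inv_subX c : {poly R} := poly3 c^-1 (c ^+ 2)^-1 (c ^+ 3)^-1.

Lemma subX_inv c : c != 0 -> eqmodX 3 ((c%:P - 'X) * inv_subX c) 1.
Proof.
move=> c0; rewrite poly3_subX; apply: eqmodX_trans (poly3M _ _ _ _ _ _) _.
by rewrite -polyC1 poly3C; apply: eqmodX_eq; congr (poly3 _ _ _); field.
Qed.

Definition wz_num n := \prod_(1 <= j < n.+1) ((sq j)%:P - 'X).
Definition wz_den n k := \prod_(0 <= j < n.+1) ((sq (k + j))%:P - 'X).
Definition wz_den_inv n k := \prod_(0 <= j < n.+1) inv_subX (sq (k + j)).

Definition wzF n k := (2 * n%:R + 1)%:P * wz_num n * wz_den_inv n k.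
Definition wzg n k : R := k%:R + (3 * n%:R - 2) / 2.
Definition wzG n k := (wzg n k)%:P * wz_num n.-1 * wz_den_inv n.-1 k.

Definition alpha n := let x : R := n%:R in
  poly3 (x / (2 * (2 * x + 1))) (- (3 / (2 * x * (2 * x + 1))))
        (- (3 / (2 * x ^+ 3 * (2 * x + 1)))).

Lemma wz_den_invK n k : (0 < k)%N -> eqmodX 3 (wz_den_inv n k * wz_den n k) 1.
Proof.
move=> k0; rewrite -big_split /=; apply: eqmodX_prod1 => j _ _.
rewrite mulrC; apply: subX_inv.
by apply: sq_neq0; rewrite addn_gt0 k0.
Qed.

Lemma wz_den_inv_recr n k : (0 < k)%N ->
  eqmodX 3 (wz_den_inv n k * wz_den n.+1 k) ((sq (k + n.+1))%:P - 'X).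
Proof.
move=> k0; rewrite [wz_den n.+1 k]big_nat_recr //= -/(wz_den n k) mulrA.
by rewrite -[X in eqmodX _ _ X]mul1r; exact: eqmodXM (wz_den_invK n k0) (eqmodX_refl _).
Qed.

Lemma wz_den_inv_recl n k : (0 < k)%N ->
  eqmodX 3 (wz_den_inv n k.+1 * wz_den n.+1 k) ((sq k)%:P - 'X).
Proof.
move=> k0; rewrite [wz_den n.+1 k]big_ltn // addn0 big_add1 /=.
have -> : \prod_(0 <= i < n.+1) ((sq (k + i.+1))%:P - 'X) = wz_den n k.+1.
  by apply: eq_bigr => i _; rewrite addnS.
rewrite mulrCA mulrC -[X in eqmodX _ _ X]mul1r.
exact: eqmodXM (wz_den_invK n (ltn0Sn k)) (eqmodX_refl _).
Qed.

Lemma wz_pair_kernel n k : (0 < k)%N ->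
  eqmodX 3 ((2 * n%:R + 1)%:P * ((sq (k + n.+1))%:P - 'X)
              - (2 * n.+1%:R + 1)%:P * alpha n.+1 * ((sq n.+1)%:P - 'X))
           ((wzg n.+1 k)%:P * ((sq (k + n.+1))%:P - 'X)
              - (wzg n.+1 k.+1)%:P * ((sq k)%:P - 'X)).
Proof.
move=> k0; rewrite /alpha !poly3_subX !poly3C.
apply: eqmodX_trans (eqmodXB (poly3M _ _ _ _ _ _)
  (eqmodX_trans (eqmodXM (poly3M _ _ _ _ _ _) (eqmodX_refl _)) (poly3M _ _ _ _ _ _))) _.
apply: eqmodX_trans (eqmodX_sym (eqmodXB (poly3M _ _ _ _ _ _) (poly3M _ _ _ _ _ _))).
have hk : k%:R != 0 :> R by rewrite pnatr_eq0 -lt0n.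
have hn : 0 <= n%:R :> R by exact: ler0n.
rewrite !poly3N !poly3D; apply: eqmodX_eq; congr (poly3 _ _ _).
all: rewrite /wzg natrD -!natr1; field.
all: by rewrite ?andbT gt_eqF //; lra.
Qed.

(* Multiplying by [wz_den n.+1 k] clears all denominators, leaving [wz_num n]
   times [wz_pair_kernel]. *)
Lemma wz_pair n k : (0 < k)%N ->
  eqmodX 3 (wzF n k - alpha n.+1 * wzF n.+1 k) (wzG n.+1 k - wzG n.+1 k.+1).
Proof.
move=> k0; apply: (@eqmodX_cancel _ _ (wz_den n.+1 k) (wz_den_inv n.+1 k)).
  by rewrite mulrC; apply: wz_den_invK.
have -> : (wzF n k - alpha n.+1 * wzF n.+1 k) * wz_den n.+1 k =
   (2 * n%:R + 1)%:P * wz_num n * (wz_den_inv n k * wz_den n.+1 k) -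
   ((2 * n.+1%:R + 1)%:P * alpha n.+1 * ((sq n.+1)%:P - 'X)) * wz_num n
     * (wz_den_inv n.+1 k * wz_den n.+1 k).
  by rewrite /wzF [wz_num n.+1]big_nat_recr //= -/(wz_num n); ring.
have -> : (wzG n.+1 k - wzG n.+1 k.+1) * wz_den n.+1 k =
   (wzg n.+1 k)%:P * wz_num n * (wz_den_inv n k * wz_den n.+1 k) -
   (wzg n.+1 k.+1)%:P * wz_num n * (wz_den_inv n k.+1 * wz_den n.+1 k).
  by rewrite /wzG /=; ring.
have eR p := eqmodXM (eqmodX_refl p) (wz_den_inv_recr n k0).
apply: eqmodX_trans (eqmodXB (eR _) (eqmodXM (eqmodX_refl _) (wz_den_invK n.+1 k0))) _.
apply: eqmodX_trans _ (eqmodX_sym (eqmodXB (eR _)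
  (eqmodXM (eqmodX_refl _) (wz_den_inv_recl n k0)))).
have := eqmodXM (eqmodX_refl (wz_num n)) (wz_pair_kernel n k0).
by congr (eqmodX _ _ _); ring.
Qed.

Definition wzS K n := \sum_(1 <= k < K.+1) wzF n k.

Definition alpha_prod n := \prod_(1 <= m < n.+1) alpha m.

Lemma alpha_prodS n : alpha_prod n.+1 = alpha_prod n * alpha n.+1.
Proof. by rewrite /alpha_prod big_nat_recr. Qed.

Lemma alpha_prod0 : alpha_prod 0 = 1.
Proof. by rewrite /alpha_prod big_geq. Qed.

Lemma wzS_recurrence K n :
  eqmodX 3 (wzS K n - alpha n.+1 * wzS K n.+1) (wzG n.+1 1 - wzG n.+1 K.+1).
Proof.
rewrite /wzS mulr_sumr -sumrB.
apply: eqmodX_trans (eqmodX_sum (G := fun k => wzG n.+1 k - wzG n.+1 k.+1) _) _.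
  by move=> k; rewrite mem_index_iota => /andP[k1 _] _; apply: wz_pair.
by rewrite sumrB -opprB -sumrB telescope_sumr // opprB.
Qed.

Lemma wzG_1 n : eqmodX 3 (wzG n.+1 1) (Mcol n.+1).
Proof.
rewrite /wzG /= /wz_den_inv.
have -> : \prod_(0 <= j < n.+1) inv_subX (sq (1 + j)) =
    \prod_(1 <= j < n.+1) inv_subX (sq j) * inv_subX (sq n.+1).
  by rewrite -big_nat_recr // big_add1 /=; apply: eq_bigr => j _; rewrite add1n.
have numK : eqmodX 3 (wz_num n * \prod_(1 <= j < n.+1) inv_subX (sq j)) 1.
  rewrite /wz_num -big_split /=; apply: eqmodX_prod1 => j.
  rewrite mem_index_iota => /andP[j1 _] _.
  exact/subX_inv/sq_neq0.
rewrite mulrA -(mulrA _ (wz_num n)).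
apply: eqmodX_trans (eqmodXM (eqmodXM (eqmodX_refl _) numK) (eqmodX_refl _)) _.
rewrite mulr1 /inv_subX poly3C; apply: eqmodX_trans (poly3M _ _ _ _ _ _) _.
have n0 : n.+1%:R != 0 :> R by rewrite pnatr_eq0.
by apply: eqmodX_eq; congr (poly3 _ _ _); rewrite /wzg; field; rewrite ?n0 ?expf_neq0.
Qed.

Lemma wzS_telescope K N :
  eqmodX 3 (wzS K 0 - alpha_prod N * wzS K N)
    (\sum_(0 <= n < N) alpha_prod n * Mcol n.+1
       - \sum_(0 <= n < N) alpha_prod n * wzG n.+1 K.+1).
Proof.
elim: N => [|N IH]; first by rewrite alpha_prod0 mul1r subrr !big_geq // subrr.
have -> : wzS K 0 - alpha_prod N.+1 * wzS K N.+1 =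
    (wzS K 0 - alpha_prod N * wzS K N)
    + alpha_prod N * (wzS K N - alpha N.+1 * wzS K N.+1).
  by rewrite alpha_prodS; ring.
have regroup (a b c d : {poly R}) : a + b - (c + d) = (a - c) + (b - d) by ring.
rewrite !big_nat_recr //= regroup -mulrBr.
apply: eqmodXD IH (eqmodXM (eqmodX_refl _) _).
exact: eqmodX_trans (wzS_recurrence K N) (eqmodXB (wzG_1 N) (eqmodX_refl _)).
Qed.

(** * Gauge transformation *)

Definition gauge m : {poly R} := poly3 1 0 (3 * harm m 4).

Lemma harmS m : harm m.+1 4 = harm m 4 + ((m.+1)%:R ^+ 4 : R)^-1.
Proof. by rewrite /harm big_nat_recr. Qed.

Lemma gauge_Mblock m : eqmodX 3 (gauge m * Mblock m.+1) (alpha m.+1 * gauge m.+1).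
Proof.
apply: eqmodX_trans (poly3M _ _ _ _ _ _) _.
apply: eqmodX_trans _ (eqmodX_sym (poly3M _ _ _ _ _ _)).
have hx : 0 <= m%:R :> R by exact: ler0n.
rewrite harmS; apply: eqmodX_eq; congr (poly3 _ _ _); rewrite -?natr1; field.
all: by rewrite ?andbT gt_eqF //; lra.
Qed.

Lemma Mblock_prod_gauge m : eqmodX 3 (Mblock_prod m) (alpha_prod m * gauge m).
Proof.
elim: m => [|m IH].
  by rewrite /Mblock_prod alpha_prod0 /gauge /harm !big_geq // mul1r mulr0 -polyC1 poly3C.
rewrite /Mblock_prod big_nat_recr //= -/(Mblock_prod m) alpha_prodS -mulrA.
apply: eqmodX_trans (eqmodXM IH (eqmodX_refl _)) _; rewrite -mulrA.
exact: eqmodXM (eqmodX_refl _) (gauge_Mblock m).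
Qed.

Lemma alpha_prod_coef0 n :
  (alpha_prod n)`_0 = 2 / ((n.+1)%:R * ('C(n.+1.*2, n.+1))%:R).
Proof.
elim: n => [|n IH]; first by rewrite alpha_prod0 coef1 /= (_ : 'C(1.*2, 1) = 2%N) //; field.
have hx : 0 <= n%:R :> R by exact: ler0n.
have b0 : 'C(n.+1.*2, n.+1)%:R != 0 :> R.
  by rewrite pnatr_eq0 -lt0n bin_gt0 -mul2n leq_pmull.
have b1 : 'C(n.+2.*2, n.+2)%:R = 2 * (2 * n.+1%:R + 1) * 'C(n.+1.*2, n.+1)%:R / n.+2%:R :> R.
  move: b0 (central_binS n.+1); set c1 := 'C(_, n.+2); set c0 := 'C(_, n.+1) => c00.
  rewrite -mul2n => /(congr1 (fun t : nat => t%:R : R)).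
  rewrite !natrM -[((2 * n.+1).+1)%:R]natr1 natrM => <-.
  by field; rewrite ?andbT gt_eqF //; lra.
rewrite alpha_prodS coef0M IH coef_poly3 /= b1 -!natr1; field.
by move: b0; rewrite -!natr1 => ->; rewrite ?andbT gt_eqF //; lra.
Qed.

Lemma Mcol_term_gauge N :
  eqmodX 3 (Mblock_prod N * Mcol N.+1)
           (alpha_prod N * Mcol N.+1 + poly3 0 0 (9 * delta_term N)).
Proof.
apply: eqmodX_trans (eqmodXM (Mblock_prod_gauge N) (eqmodX_refl _)) _.
rewrite mulrAC; set W := alpha_prod N * Mcol N.+1.
apply: eqmodX_trans (eqmodXM (eqmodX_poly3 W) (eqmodX_refl _)) _.
apply: eqmodX_trans (poly3M _ _ _ _ _ _) _.
apply: eqmodX_trans _ (eqmodX_sym (eqmodXD (eqmodX_poly3 W) (eqmodX_refl _))).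
rewrite poly3D; apply: eqmodX_eq; congr (poly3 _ _ _); [ring|ring|].
have bC : 'C(N.+1.*2, N.+1)%:R != 0 :> R by rewrite pnatr_eq0 -lt0n bin_gt0 -mul2n leq_pmull.
have hx : 0 <= N%:R :> R by exact: ler0n.
rewrite /W coef0M alpha_prod_coef0 /Mcol coef_poly3 /= /delta_term; field.
by rewrite bC andbT gt_eqF //; lra.
Qed.

Lemma Mcol_sum_gauge N : eqmodX 3 (Mcol_sum N)
  (\sum_(0 <= n < N) alpha_prod n * Mcol n.+1 + poly3 0 0 (9 * series delta_term N)).
Proof.
elim: N => [|N IH].
  by rewrite /Mcol_sum /series /= !big_geq // mulr0 -poly3C polyC0 addr0.
rewrite /Mcol_sum big_nat_recr //= -/(Mcol_sum N) big_nat_recr //= seriesSr.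
have -> : poly3 0 0 (9 * (series (@delta_term R) N + delta_term N)) =
    poly3 0 0 (9 * series delta_term N) + poly3 0 0 (9 * delta_term N).
  by rewrite poly3D addr0 mulrDr.
rewrite addrACA.
exact: eqmodXD IH (Mcol_term_gauge N).
Qed.

Lemma normX_inv_subX c : 0 < c -> normX 3 (inv_subX c) = c^-1 + (c ^+ 2)^-1 + (c ^+ 3)^-1.
Proof.
by move=> c0; rewrite normX_poly3 !ger0_norm // ltW // invr_gt0 // exprn_gt0.
Qed.

Lemma normX_inv_subX_le4 c : 4 <= c -> normX 3 (inv_subX c) <= 21 / 16 * c^-1.
Proof.
move=> c4; have c0 : 0 < c by apply: lt_le_trans c4.
rewrite normX_inv_subX // -!exprVn.
have v0 : 0 < c^-1 by rewrite invr_gt0.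
have v4 : c^-1 <= 4^-1 by rewrite lef_pV2 ?posrE.
move: v0 v4; set v := c^-1 => v0 v4.
have v2 : v ^+ 2 <= v / 4 by rewrite expr2; nra.
have v3 : v ^+ 3 <= v / 16 by rewrite exprS; nra.
lra.
Qed.

Lemma normX_inv_subX_le1 c : 1 <= c -> normX 3 (inv_subX c) <= 3 * c^-1.
Proof.
move=> c1; have c0 : 0 < c by apply: lt_le_trans c1.
rewrite normX_inv_subX // -!exprVn.
have v0 : 0 < c^-1 by rewrite invr_gt0.
have v1 : c^-1 <= 1 by rewrite invr_le1 // unitfE gt_eqF.
move: v0 v1; set v := c^-1 => v0 v1.
have v2 : v ^+ 2 <= v by rewrite expr2; nra.
have v3 : v ^+ 3 <= v by rewrite exprS; nra.
lra.
Qed.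

Lemma alpha_subX m : (0 < m)%N -> eqmodX 3 (alpha m * ((sq m)%:P - 'X))
  (poly3 (m%:R ^+ 3 / (2 * (2 * m%:R + 1))) (- (2 * m%:R / (2 * m%:R + 1))) 0).
Proof.
move=> m0; rewrite poly3_subX; apply: eqmodX_trans (poly3M _ _ _ _ _ _) _.
have m1 : 1 <= m%:R :> R by rewrite ler1n.
apply: eqmodX_eq; congr (poly3 _ _ _); field.
all: by rewrite ?andbT gt_eqF //; lra.
Qed.

Lemma normX_alpha_factor m k : (0 < m)%N -> (0 < k)%N ->
  normX 3 (alpha m * ((sq m)%:P - 'X) * inv_subX (sq (k + m))) <= 1 / 2.
Proof.
move=> m0 k0; apply: le_trans (normXM _ _ _) _.
have m1 : 1 <= m%:R :> R by rewrite ler1n.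
have k1 : 1 <= k%:R :> R by rewrite ler1n.
have a0 : 0 <= m%:R ^+ 3 / (2 * (2 * m%:R + 1)) :> R.
  by apply: divr_ge0; [apply: exprn_ge0|]; lra.
have b0 : 0 <= 2 * m%:R / (2 * m%:R + 1) :> R by apply: divr_ge0; lra.
rewrite (normX_eqmod (alpha_subX m0)) normX_poly3 normr0 addr0 normrN !ger0_norm //.
set A := _ + _; have A0 : 0 <= A by rewrite addr_ge0.
have c4 : 4 <= sq (k + m) by rewrite natrD; nra.
apply: le_trans (ler_wpM2l A0 (normX_inv_subX_le4 c4)) _.
have inv_le : (sq (k + m))^-1 <= ((m%:R + 1) ^+ 2)^-1.
  by rewrite lef_pV2 ?posrE ?natrD; nra.
suff : A * (21 / 16 * ((m%:R + 1) ^+ 2)^-1) <= 1 / 2 by nra.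
have -> : A * (21 / 16 * ((m%:R + 1) ^+ 2)^-1) =
    (21 * (m%:R ^+ 3 + 4 * m%:R)) / (32 * (2 * m%:R + 1) * (m%:R + 1) ^+ 2).
  by rewrite /A; field; rewrite ?andbT gt_eqF //; lra.
by rewrite ler_pdivrMr; nra.
Qed.

Lemma alpha_prod_wz_kernel n k : alpha_prod n * wz_num n * wz_den_inv n k =
  inv_subX (sq k) * \prod_(1 <= m < n.+1) (alpha m * ((sq m)%:P - 'X) * inv_subX (sq (k + m))).
Proof. by rewrite /wz_den_inv big_ltn // addn0 !big_split /= /alpha_prod /wz_num; ring. Qed.

Lemma normX_alpha_prod_wz n k : (0 < k)%N ->
  normX 3 (alpha_prod n * wz_num n * wz_den_inv n k) <= 3 * (sq k)^-1 * (1 / 2) ^+ n.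
Proof.
move=> k0; rewrite alpha_prod_wz_kernel; apply: le_trans (normXM _ _ _) _.
have k1 : 1 <= sq k by rewrite exprn_ege1 // ler1n.
apply: ler_pM; [exact: normX_ge0 | exact: normX_ge0 | exact: normX_inv_subX_le1 |].
by apply: normX_prod_nat_le => m /andP[m0 _]; exact: normX_alpha_factor.
Qed.

Lemma normX_alpha_prod_wzS K N :
  normX 3 (alpha_prod N * wzS K N) <= 6 * (2 * N%:R + 1) * (1 / 2) ^+ N.
Proof.
have N0 : 0 <= 2 * N%:R + 1 :> R by rewrite addr_ge0 ?mulr_ge0.
have -> : alpha_prod N * wzS K N =
    \sum_(1 <= k < K.+1) (2 * N%:R + 1) *: (alpha_prod N * wz_num N * wz_den_inv N k).
  by rewrite /wzS mulr_sumr; apply: eq_bigr => k _; rewrite /wzF -mul_polyC; ring.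
apply: le_trans (normX_sum _ _ _ _) _.
under eq_bigr do rewrite normXZ ger0_norm //.
have -> : 6 * (2 * N%:R + 1) * (1 / 2) ^+ N =
    (2 * N%:R + 1) * (3 * (1 / 2) ^+ N) * 2 :> R by ring.
set c := (2 * N%:R + 1) * (3 * (1 / 2) ^+ N).
have c0 : 0 <= c by rewrite mulr_ge0 // mulr_ge0 // exprn_ge0 //; lra.
apply: le_trans (_ : _ <= \sum_(1 <= k < K.+1) c * (sq k)^-1) _.
  rewrite big_nat_cond [leRHS]big_nat_cond; apply: ler_sum => k /andP[/andP[k1 _] _].
  rewrite /c -[leRHS]mulrA; apply: ler_wpM2l => //.
  by rewrite [leRHS]mulrAC; exact: normX_alpha_prod_wz.
by rewrite -mulr_sumr ler_wpM2l ?sum_inv_sqr_le2.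
Qed.

Lemma normX_sum_alpha_prod_wzG N : exists C, forall K,
  normX 3 (\sum_(0 <= n < N) alpha_prod n * wzG n.+1 K.+1) <= C / K.+1%:R.
Proof.
exists (\sum_(0 <= n < N) 6 * (n%:R + 1)) => K.
apply: le_trans (normX_sum _ _ _ _) _; rewrite mulr_suml; apply: ler_sum => n _.
have -> : alpha_prod n * wzG n.+1 K.+1 =
    wzg n.+1 K.+1 *: (alpha_prod n * wz_num n * wz_den_inv n K.+1).
  by rewrite /wzG /= -mul_polyC; ring.
have n0 : 0 <= n%:R :> R by exact: ler0n.
have x1 : 1 <= K.+1%:R :> R by rewrite ler1n.
rewrite /wzg -[n.+1%:R]natr1; move: x1; set x := K.+1%:R => x1.
have g0 : 0 <= x + (3 * (n%:R + 1) - 2) / 2 by lra.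
rewrite normXZ ger0_norm //.
apply: le_trans (ler_wpM2l g0 (normX_alpha_prod_wz n (ltn0Sn K))) _.
have s0 : 0 <= 3 * (x ^+ 2)^-1 by rewrite mulr_ge0 // invr_ge0 exprn_ge0 //; lra.
apply: le_trans (_ : _ <= (x + (3 * (n%:R + 1) - 2) / 2) * (3 * (x ^+ 2)^-1)) _.
  by apply: ler_wpM2l => //; apply: ler_piMr => //; rewrite exprn_ile1 //; lra.
have -> : 6 * (n%:R + 1) / x = 6 * (n%:R + 1) * x * (x ^+ 2)^-1 by field; lra.
rewrite mulrCA mulrA; apply: ler_wpM2r; first by rewrite invr_ge0 exprn_ge0 //; lra.
nra.
Qed.

Lemma normX_Mblock m : (0 < m)%N -> normX 3 (Mblock m) <= 2 / 3.
Proof.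
move=> m0; have m1 : 1 <= m%:R :> R by rewrite ler1n.
have a0 : 0 <= m%:R / (2 * (2 * m%:R + 1)) :> R by apply: divr_ge0; lra.
have b0 : 0 <= 3 / (2 * m%:R * (2 * m%:R + 1)) :> R.
  by apply: divr_ge0; [lra | apply: mulr_ge0; lra].
rewrite normX_poly3 normr0 addr0 normrN !ger0_norm //.
have -> : m%:R / (2 * (2 * m%:R + 1)) + 3 / (2 * m%:R * (2 * m%:R + 1)) =
    (m%:R ^+ 2 + 3) / (2 * m%:R * (2 * m%:R + 1)) :> R.
  by field; rewrite ?andbT gt_eqF //; lra.
by rewrite ler_pdivrMr; nra.
Qed.

Lemma coef_wzS0 K i : (i < 3)%N ->
  (wzS K 0)`_i = series (fun k => ((k.+1)%:R ^+ (2 * i.+1))^-1 : R) K.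
Proof.
move=> lti; rewrite /wzS coef_sum seriesEnat /= big_add1 /=.
apply: eq_bigr => k _.
rewrite /wzF /wz_num /wz_den_inv big_geq // big_nat1 addn0 mulr0 add0r polyC1 !mul1r.
by rewrite /inv_subX coef_poly3; case: i lti => [|[|[|i]]] //= _; rewrite -exprM.
Qed.

(* Up to the gauge term, [Mcol_sum N] - [wzS K 0] is the remainder in [wzS_telescope]. *)
Lemma Mcol_sum_coef_near N i : (i < 3)%N -> exists C, forall K,
  `|((Mcol_sum N)`_i - (poly3 0 0 (9 * series delta_term N))`_i) - (wzS K 0)`_i|
    <= 6 * (2 * N%:R + 1) * (1 / 2) ^+ N + C / K.+1%:R.
Proof.
move=> lti; have [C boundG] := normX_sum_alpha_prod_wzG N; exists C => K.
have := Mcol_sum_gauge N lti; rewrite coefD.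
set e := (poly3 0 0 _)`_i => eM.
have := wzS_telescope K N lti; rewrite !coefB.
set g := (\sum_(0 <= n < N) alpha_prod n * wzG n.+1 K.+1)`_i.
set qs := (alpha_prod N * wzS K N)`_i => eS.
have -> : (Mcol_sum N)`_i - e - (wzS K 0)`_i = g - qs by lra.
apply: le_trans (ler_normB _ _) _; rewrite addrC; apply: lerD.
- exact: le_trans (coef_le_normX _ lti) (normX_alpha_prod_wzS K N).
- exact: le_trans (coef_le_normX _ lti) (boundG K).
Qed.

Lemma Mcol_sum_coef_cvg i : (i < 3)%N ->
  (fun N => (Mcol_sum N)`_i) @ \oo --> zeta (2 * i.+1) + (if i == 2%N then delta else 0).
Proof.
move=> lti.
have zeta_cvg : (fun K => (wzS K 0)`_i) @ \oo --> zeta (2 * i.+1).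
  rewrite (funext (fun K => coef_wzS0 K lti)).
  by apply: cvg_series_inv_pow; rewrite mulnS.
apply: (@cvg_near _ _ (fun N => zeta (2 * i.+1) + (poly3 0 0 (9 * series delta_term N))`_i)).
- apply: cvgD; first exact: cvg_cst.
  under eq_fun do rewrite coef_poly3.
  case: i lti {zeta_cvg} => [|[|[|i]]] //= _; try exact: cvg_cst.
  by apply: cvgMl_tmp; exact: cvg_delta_series.
- exact: cvg_lin_half_pow.
- move=> N; have [C near_zeta] := Mcol_sum_coef_near N lti.
  rewrite opprD addrA addrAC; apply: (ler_dist_cvg zeta_cvg _ near_zeta).
  by rewrite -(mulr0 C); apply: cvgMl_tmp; exact: cvg_harmonic.
Qed.

Lemma Mblock_prod_coef_cvg j : (j < 3)%N -> (fun N => (Mblock_prod N)`_j) @ \oo --> 0.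
Proof.
move=> ltj; apply: (@cvg_near _ _ (cst 0) (geometric 1 (2 / 3))) => [||N /=].
- exact: cvg_cst.
- by apply: cvg_geometric; rewrite ger0_norm; lra.
- rewrite subr0 mul1r; apply: le_trans (coef_le_normX _ ltj) _.
  by apply: normX_prod_nat_le => m /andP[m0 _]; exact: normX_Mblock.
Qed.

End MatrixProduct.

Theorem mainTheorem5 (R : realType) :
  cvgn (series (@delta_term R)) /\
  (@Mprod R) @ \oo --> (@Mlim R) /\
  0 < (@delta R).
Proof.
split; first exact: cvg_delta_series.
split; last exact: delta_gt0.
apply: cvg_mx_entries => i j; rewrite (funext (@MprodE R)) /Mlim mxE.
under eq_fun do rewrite mxE.
case: i j => [[|[|[|[|i]]]] Hi] [[|[|[|[|j]]]] Hj] //=; try exact: cvg_cst.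
all: try exact: Mblock_prod_coef_cvg.
- exact: (Mcol_sum_coef_cvg (i := 2)).
- by rewrite -[zeta 4]addr0; exact: (Mcol_sum_coef_cvg (i := 1)).
- by rewrite -[zeta 2]addr0; exact: (Mcol_sum_coef_cvg (i := 0)).
Qed.
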